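(* Let $\alpha$ be an epsilon number. 1. Let $t\in[\alpha,\alpha^+)$ and $B(t):=S_{\mathrm{CNF}}(t)\cup\{Lj : Lq\in S_{\mathrm{CNF}}(t),\ L\in\mathbb{P},\ q\in[1,\omega),\ j\in\{1,\dots,q\}\}$ (a finite subset of $t+1$ containing $t$). Then every $(<,<_1,+,\lambda x.\omega^x)$-isomorphism $h:B(t)\to h[B(t)]\subseteq\alpha$ with $h(x)=x$ for all $x\in B(t)\cap\alpha$ satisfies $h(\alpha)\in\mathbb{E}\cap\alpha$ and, for every $s\in B(t)$, $\mathrm{Ep}(s)\cap\alpha\subseteq h(\alpha)$ and $h(s)=s[\alpha:=h(\alpha)]$. 2. Let $t\in(\alpha,\alpha^+)$ with $\alpha<^1 t$, and let $B\subseteq t$ be finite. Then there exists $\gamma\in\mathbb{E}\cap\alpha$ such that $\mathrm{Ep}(s)\cap\alpha\subseteq\gamma$ for all $s\in B$, and the map $h:B\to h[B]\subseteq\alpha$, $s\mapsto s[\alpha:=\gamma]$, is an $(<,<_1,+,\lambda x.\omega^x)$-isomorphism with $h(x)=x$ for all $x\in B\cap\alpha$.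
   Context: $\mathbb{P}=\{\omega^\xi\}$; $\mathbb{E}$ = epsilon numbers; $x^+:=\min\{e\in\mathbb{E}:e>x\}$. $x=_{\mathrm{CNF}}L_1l_1+\dots+L_nl_n$: Cantor normal form with $L_1>\dots>L_n$ in $\mathbb{P}$, $0<l_i<\omega$. $S_{\mathrm{CNF}}(q)$, for $q=_{\mathrm{CNF}}L_1q_1+\dots+L_nq_n$: $S_{\mathrm{CNF}}(q):=\{L_1q_1,\dots,L_nq_n\}\cup\{\sum_{i=1}^jL_iq_i : 1\le j\le n\}\cup\bigcup\{S_{\mathrm{CNF}}(A_i): i\in[1,n],\ L_i\notin\mathbb{E},\ L_i=_{\mathrm{CNF}}\omega^{A_i}\}$. $\mathrm{Ep}(x)$: $\{x\}$ if $x\in\mathbb{E}$; $\mathrm{Ep}(L_1)\cup\dots\cup\mathrm{Ep}(L_n)$ if $x\notin\mathbb{E}$, $x=_{\mathrm{CNF}}L_1l_1+\dots+L_nl_n$, $n\ge2$ or $l_1\ge2$; $\mathrm{Ep}(L)$ if $x\notin\mathbb{E}$, $x=_{\mathrm{CNF}}\omega^L$; $\mathrm{Ep}(0)=\emptyset$. Substitution for $\alpha,e\in\mathbb{E}$: $x[\alpha:=e]=x$ if $x\in\mathbb{E}\setminus\{\alpha\}$; $=e$ if $x=\alpha$; $=L_1[\alpha:=e]l_1+\dots+L_n[\alpha:=e]l_n$ if $x\notin\mathbb{E}$, $x=_{\mathrm{CNF}}L_1l_1+\dots+L_nl_n$, $n\ge2$ or $l_1\ge 2$; $=\omega^{L[\alpha:=e]}$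 if $x\notin\mathbb{E}$, $x=_{\mathrm{CNF}}\omega^L$. For finite sets $Z,\tilde Z$, a bijection $h:Z\to\tilde Z$ is an $(<,<_1,+)$-isomorphism if for $x,y,z\in Z$: $x<y\iff h(x)<h(y)$, $x<_1y\iff h(x)<_1h(y)$, $x+y=z\iff h(x)+h(y)=h(z)$; an $(<,<_1,+,\lambda x.\omega^x)$-isomorphism if moreover $\omega^x=y\iff\omega^{h(x)}=h(y)$. Carlson's $<_1$ (recursion on $\beta$): $\alpha<_1\beta$ iff $\alpha<\beta$ and every finite $B\subseteq\beta$ admits an $(<,<_1,+)$-isomorphism $h:B\to h[B]\subseteq\alpha$ fixing $B\cap\alpha$ pointwise. $\alpha<^1\beta$ means: $\alpha<\beta$ and for every finite $Z\subseteq\beta$ there exist a finite $\tilde Z\subseteq\alpha$ and an $(<,<_1,+,\lambda x.\omega^x)$-isomorphism $h:Z\to\tilde Z$ with $h(x)=x$ for all $x\in Z\cap\alpha$. *)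

(* Ordinals are represented by an abstract "ordinal model":
   a well-ordered type with successor, ordinal addition and omega-exponentiation
   characterised by their transfinite recursion equations.  Every such model is
   (uniquely) isomorphic to an initial segment theta of the ordinals (necessarily
   an epsilon number) with the true operations; conversely every epsilon number
   alpha lies in such a model (e.g. theta = alpha^+). *)
From Stdlib Require Import List Arith Sorted.
Import ListNotations.
Set Implicit Arguments.

Definition leR {T : Type} (lt : T -> T -> Prop) (x y : T) : Prop := lt x y \/ x = y.

Definition is_lub {T : Type} (lt : T -> T -> Prop) (P : T -> Prop) (x : T) : Prop :=
  (forall y, P y -> leR lt y x) /\ (forall z, (forall y, P y -> leR lt y z) -> leR lt x z).

Definition is_limitR {T : Type} (lt : T -> T -> Prop) (zero : T) (succ : T -> T) (l : T) :=
  l <> zero /\ forall y, lt y l -> lt (succ y) l.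

Fixpoint nmulg {T : Type} (zero : T) (add : T -> T -> T) (x : T) (n : nat) : T :=
  match n with
  | O => zero
  | S k => add (nmulg zero add x k) x
  end.

Record OrdModel := {
  carrier :> Type;
  olt : carrier -> carrier -> Prop;
  olt_irrefl : forall x, ~ olt x x;
  olt_trans : forall x y z, olt x y -> olt y z -> olt x z;
  olt_total : forall x y, olt x y \/ x = y \/ olt y x;
  olt_wf : well_founded olt;
  ozero : carrier;
  ozero_least : forall x, ~ olt x ozero;
  osucc : carrier -> carrier;
  osucc_spec : forall x, olt x (osucc x) /\ (forall y, olt x y -> leR olt (osucc x) y);
  oadd : carrier -> carrier -> carrier;
  oadd_zero : forall a, oadd a ozero = a;
  oadd_succ : forall a b, oadd a (osucc b) = osucc (oadd a b);
  oadd_limit : forall a l, is_limitR olt ozero osucc l ->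
      is_lub olt (fun y => exists c, olt c l /\ y = oadd a c) (oadd a l);
  oexp : carrier -> carrier;   (* x |-> omega^x *)
  oexp_zero : oexp ozero = osucc ozero;
  oexp_succ : forall x,
      is_lub olt (fun y => exists n : nat, y = nmulg ozero oadd (oexp x) n) (oexp (osucc x));
  oexp_limit : forall l, is_limitR olt ozero osucc l ->
      is_lub olt (fun y => exists c, olt c l /\ y = oexp c) (oexp l)
}.

Arguments olt {o}.
Arguments ozero {o}.
Arguments osucc {o}.
Arguments oadd {o}.
Arguments oexp {o}.

Section Defs.
Context {M : OrdModel}.

Definition ole (x y : M) : Prop := leR olt x y.

Definition isP (L : M) : Prop := exists xi, L = oexp xi.

Definition eps (e : M) : Prop := oexp e = e.

(* t < alpha^+  (alpha^+ = least epsilon number > alpha) *)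
Definition below_next_eps (a t : M) : Prop := forall e, eps e -> olt a e -> olt t e.

Definition nmul (x : M) (n : nat) : M := nmulg ozero oadd x n.

Definition sumCNF (s : list (M * nat)) : M :=
  fold_left (fun acc p => oadd acc (nmul (fst p) (snd p))) s ozero.

Definition CNF (x : M) (s : list (M * nat)) : Prop :=
  Forall (fun p => isP (fst p) /\ (1 <= snd p)%nat) s /\
  Sorted (fun p q => olt (fst q) (fst p)) s /\
  x = sumCNF s.

Inductive SCNF : M -> M -> Prop :=
| SC_term q s L l : CNF q s -> In (L, l) s -> SCNF q (nmul L l)
| SC_part q s j : CNF q s -> (1 <= j <= length s)%nat -> SCNF q (sumCNF (firstn j s))
| SC_rec q s L l A y : CNF q s -> In (L, l) s -> ~ eps L -> L = oexp A ->
    SCNF A y -> SCNF q y.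

Definition inB (t x : M) : Prop :=
  SCNF t x \/
  exists L q j, SCNF t (nmul L q) /\ isP L /\ (1 <= q)%nat /\ (1 <= j <= q)%nat /\
                x = nmul L j.

Inductive Ep : M -> M -> Prop :=
| Ep_eps x : eps x -> Ep x x
| Ep_sum x s L l e : ~ eps x -> CNF x s ->
    ((2 <= length s)%nat \/ exists L1 l1, s = [(L1, l1)] /\ (2 <= l1)%nat) ->
    In (L, l) s -> Ep L e -> Ep x e
| Ep_pow x L e : ~ eps x -> x = oexp L -> Ep L e -> Ep x e.

Inductive Subst (a e : M) : M -> M -> Prop :=
| Sb_eps x : eps x -> x <> a -> Subst a e x x
| Sb_alpha : Subst a e a e
| Sb_sum x s s' : ~ eps x -> CNF x s ->
    ((2 <= length s)%nat \/ exists L1 l1, s = [(L1, l1)] /\ (2 <= l1)%nat) ->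
    Forall2 (fun p p' => snd p' = snd p /\ Subst a e (fst p) (fst p')) s s' ->
    Subst a e x (sumCNF s')
| Sb_pow x L L' : ~ eps x -> x = oexp L -> Subst a e L L' -> Subst a e x (oexp L')
| Sb_zero : Subst a e ozero ozero.

Definition iso_with (R : M -> M -> Prop) (Z : list M) (h : M -> M) : Prop :=
  forall x y z, In x Z -> In y Z -> In z Z ->
    (olt x y <-> olt (h x) (h y)) /\
    (R x y <-> R (h x) (h y)) /\
    (oadd x y = z <-> oadd (h x) (h y) = h z).

Definition lt1_step (b : M) (rec : forall c : M, olt c b -> M -> Prop) (a : M) : Prop :=
  olt a b /\
  forall B : list M, (forall x, In x B -> olt x b) ->
    exists h : M -> M,
      iso_with (fun x y => exists p : olt y b, rec y p x) B h /\
      (forall x, In x B -> olt (h x) a) /\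
      (forall x, In x B -> olt x a -> h x = x).

(* Carlson's a <_1 b, by well-founded recursion on b *)
Definition lt1 (a b : M) : Prop :=
  Fix (@olt_wf M) (fun _ => M -> Prop) lt1_step b a.

Definition iso2 (Z : list M) (h : M -> M) : Prop :=
  iso_with lt1 Z h /\
  forall x y, In x Z -> In y Z -> (oexp x = y <-> oexp (h x) = h y).

Definition ltup1 (a b : M) : Prop :=
  olt a b /\
  forall Z : list M, (forall x, In x Z -> olt x b) ->
    exists h : M -> M, iso2 Z h /\
      (forall x, In x Z -> olt (h x) a) /\
      (forall x, In x Z -> olt x a -> h x = x).

End Defs.

(* An (<,<_1,+,omega^x)-isomorphism h that fixes every ordinal below the epsilon number alpha
   is forced, on any finite set Z containing alpha and closed under taking Cantor normal form
   pieces (initial sums, the multiples L j of a term L l, exponents of non-epsilon terms), to be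
   the substitution s |-> s[alpha := h(alpha)].  Indeed, by induction on s in Z: below alpha h is
   the identity; a sum L_1 l_1 + ... + L_n l_n goes to h(L_1) l_1 + ... + h(L_n) l_n because h
   respects +; a non-epsilon power omega^A goes to omega^(h A) because h respects omega^x; and
   h(alpha) is an epsilon number because omega^alpha = alpha.  Since s < alpha^+, the only
   epsilon number of Ep(s) that is >= alpha is alpha itself, and those below alpha are fixed by
   the order-preserving h, hence lie below h(alpha).  Part 1 applies this to Z = B(t), which is
   closed and contains alpha; Part 2 to the isomorphism that alpha <^1 t provides on a closed
   finite set containing alpha and B. *)

From Stdlib Require Import List Arith Lia Sorted Classical.
Import ListNotations.

Lemma Sorted_app_l {A} (R : A -> A -> Prop) l1 l2 : Sorted R (l1 ++ l2) -> Sorted R l1.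
Proof.
  induction l1 as [|a l1 IH]; simpl; intros H. constructor.
  inversion H; subst. constructor. auto. destruct l1; simpl in *. constructor. inversion H3; subst.
  constructor; auto.
Qed.
Lemma firstn_length_app {A} (l1 l2 : list A) : firstn (length l1) (l1 ++ l2) = l1.
Proof. rewrite <- (Nat.add_0_r (length l1)), firstn_app_2. simpl. apply app_nil_r. Qed.
Lemma in_firstn {A} (x : A) n l : In x (firstn n l) -> In x l.
Proof. intros H. rewrite <- (firstn_skipn n l). apply in_or_app; auto. Qed.
Lemma firstn_prefix {A} (cs pre post s : list A) j : cs = pre ++ post -> cs = firstn j s ->
  firstn (length pre) s = pre /\ (length pre <= length s)%nat.
Proof.
  intros H1 H2.
  assert (H : s = pre ++ (post ++ skipn j s)) by (rewrite app_assoc, <- H1, H2, firstn_skipn; auto).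
  rewrite H at 1 2. rewrite firstn_length_app. split; auto. rewrite length_app. lia.
Qed.
Lemma Forall2_map {A B} (R : A -> B -> Prop) (f : A -> B) l :
  (forall a, In a l -> R a (f a)) -> Forall2 R l (map f l).
Proof. induction l; simpl; intros H; constructor; auto. Qed.

Section OrdinalModel.
Variable M : OrdModel.
Local Notation "x <o y" := (@olt M x y) (at level 70).
Local Notation "x <=o y" := (@ole M x y) (at level 70).

(** * Order, addition and exponentiation *)

Lemma lt_irrefl (x:M) : ~ x <o x. Proof. exact (olt_irrefl M x). Qed.
Lemma lt_trans (x y z : M) : x <o y -> y <o z -> x <o z. Proof. exact (olt_trans M x y z). Qed.
Lemma lt_total (x y : M): x <o y \/ x = y \/ y <o x. Proof. exact (olt_total M x y). Qed.
Lemma le_refl (x:M) : x <=o x. Proof. right; reflexivity. Qed.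
Lemma lt_le_incl (x y:M) : x <o y -> x <=o y. Proof. left; auto. Qed.
Lemma le_lt_trans (x y z:M) : x <=o y -> y <o z -> x <o z.
Proof. intros [H| ->] H2; auto. eapply lt_trans; eauto. Qed.
Lemma lt_le_trans (x y z:M) : x <o y -> y <=o z -> x <o z.
Proof. intros H [H2| <-]; auto. eapply lt_trans; eauto. Qed.
Lemma le_trans (x y z:M) : x <=o y -> y <=o z -> x <=o z.
Proof. intros [H| ->] H2; auto. left; eapply lt_le_trans; eauto. Qed.
Lemma le_not_lt (x y:M) : x <=o y -> ~ y <o x.
Proof. intros H H2. apply (lt_irrefl x). eapply le_lt_trans; eauto. Qed.
Lemma not_lt_le (x y:M) : ~ x <o y -> y <=o x.
Proof. intros H. destruct (lt_total x y) as [H1|[H1|H1]]; [contradiction| right; auto | left; auto].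
  Qed.
Lemma not_le_lt (x y:M) : ~ x <=o y -> y <o x.
Proof. intros H.
  destruct (lt_total x y) as [H1|[H1|H1]]; auto; exfalso; apply H; [left|right]; auto. Qed.
Lemma le_antisym (x y:M) : x <=o y -> y <=o x -> x = y.
Proof. intros [H|H] H2; auto. exfalso; eapply le_not_lt; eauto. Qed.
Lemma lt_neq (x y:M) : x <o y -> x <> y.
Proof. intros H ->; eapply lt_irrefl; eauto. Qed.

Lemma ord_ind (P : M -> Prop) : (forall x, (forall y, y <o x -> P y) -> P x) -> forall x, P x.
Proof. intros H x. apply (well_founded_ind (olt_wf M)). auto. Qed.

Lemma succ_gt (x:M) : x <o osucc x. Proof. exact (proj1 (osucc_spec M x)). Qed.
Lemma succ_least (x y:M) : x <o y -> osucc x <=o y. Proof. exact (proj2 (osucc_spec M x) y). Qed.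
Lemma lt_succ_le (x y:M) : y <o osucc x -> y <=o x.
Proof. intros H. apply not_lt_le. intros H2. apply succ_least in H2. eapply le_not_lt; eauto. Qed.
Lemma succ_le_mono (x y:M) : x <=o y -> osucc x <=o osucc y.
Proof. intros [H| ->]. apply succ_least. eapply lt_trans; eauto. apply succ_gt. apply le_refl. Qed.
Lemma zero_le (x:M) : ozero <=o x.
Proof. apply not_lt_le. apply ozero_least. Qed.
Lemma zero_lt (x:M) : x <> ozero -> ozero <o x.
Proof. intros H. destruct (zero_le x) as [H1|H1]; auto. congruence. Qed.

Lemma lub_upper (P : M -> Prop) x y : is_lub olt P x -> P y -> y <=o x.
Proof. intros [H _] Hy; apply H; auto. Qed.
Lemma lub_least (P : M -> Prop) x z : is_lub olt P x -> (forall y, P y -> y <=o z) -> x <=o z.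
Proof. intros [_ H] Hy; apply H; auto. Qed.
Lemma lub_approx (P : M -> Prop) x z : is_lub olt P x -> z <o x -> exists y, P y /\ z <o y.
Proof.
  intros H Hz. apply NNPP. intros Hn.
  assert (x <=o z).
  { apply (lub_least P); auto. intros y Py. apply not_lt_le. intros Hzy. apply Hn; eauto. }
  eapply le_not_lt; eauto.
Qed.

Definition is_limit (l:M) := is_limitR olt ozero osucc l.

Lemma ord_cases (x:M) : x = ozero \/ (exists y, x = osucc y) \/ is_limit x.
Proof.
  destruct (classic (x = ozero)) as [H|H]; auto.
  destruct (classic (exists y, x = osucc y)) as [H2|H2]; auto.
  right; right; split; auto. intros y Hy.
  destruct (lt_total (osucc y) x) as [H3|[H3|H3]]; auto.
  - exfalso; eauto.
  - apply lt_succ_le in H3. exfalso; eapply le_not_lt; eauto.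
Qed.

Lemma add_lt_mono_l (a y z:M) : y <o z -> oadd a y <o oadd a z.
Proof.
  revert y. induction z as [z IH] using ord_ind. intros y Hyz.
  destruct (ord_cases z) as [->|[[z' ->]|Hl]].
  - exfalso; eapply ozero_least; eauto.
  - rewrite oadd_succ. apply lt_succ_le in Hyz. destruct Hyz as [H| ->].
    + eapply lt_trans. apply IH; [apply succ_gt | exact H]. apply succ_gt.
    + apply succ_gt.
  - apply lt_le_trans with (oadd a (osucc y)).
    + rewrite oadd_succ; apply succ_gt.
    + eapply lub_upper. apply (oadd_limit M a Hl). exists (osucc y); split; auto. apply Hl; auto.
Qed.
Lemma add_le_mono_l (a y z:M) : y <=o z -> oadd a y <=o oadd a z.
Proof. intros [H| ->]. left; apply add_lt_mono_l; auto. apply le_refl. Qed.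
Lemma add_cancel_l (a y z:M) : oadd a y = oadd a z -> y = z.
Proof. intros H.
  destruct (lt_total y z) as [H1|[H1|H1]]; auto;
    apply (add_lt_mono_l a) in H1; rewrite H in H1; exfalso; eapply lt_irrefl; eauto.
Qed.
Lemma add_lt_mono_l_inv (a y z:M) : oadd a y <o oadd a z -> y <o z.
Proof. intros H. apply not_le_lt. intros H2. apply (add_le_mono_l a) in H2. eapply le_not_lt; eauto.
  Qed.
Lemma le_add_r (a y:M) : a <=o oadd a y.
Proof. rewrite <- (oadd_zero M a) at 1. apply add_le_mono_l, zero_le. Qed.
Lemma le_add_l (a y:M) : y <=o oadd a y.
Proof.
  induction y as [y IH] using ord_ind. apply not_lt_le. intros H.
  specialize (IH _ H). apply (add_lt_mono_l a) in H. eapply le_not_lt; eauto.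
Qed.
Lemma add_zero_l (x:M) : oadd ozero x = x.
Proof.
  induction x as [x IH] using ord_ind. apply le_antisym; [|apply le_add_l].
  destruct (ord_cases x) as [->|[[z ->]|Hl]].
  - rewrite oadd_zero; apply le_refl.
  - rewrite oadd_succ, IH. apply le_refl. apply succ_gt.
  - eapply lub_least. apply (oadd_limit M ozero Hl). intros y [c [Hc ->]]. rewrite IH; auto.
    left; auto.
Qed.
Lemma add_limit (a l:M) : is_limit l -> is_limit (oadd a l).
Proof.
  intros Hl. split.
  - intros H. destruct Hl as [Hl0 _]. apply zero_lt in Hl0. apply (add_lt_mono_l a) in Hl0.
    rewrite H in Hl0. eapply ozero_least; eauto.
  - intros y Hy. destruct (lub_approx _ _ _ (oadd_limit M a Hl) Hy) as [z [[c [Hc ->]] Hz]].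
    eapply le_lt_trans. apply succ_least; eauto. apply add_lt_mono_l; auto.
Qed.
Lemma add_assoc (a b c:M) : oadd (oadd a b) c = oadd a (oadd b c).
Proof.
  induction c as [c IH] using ord_ind.
  destruct (ord_cases c) as [->|[[z ->]|Hl]].
  - rewrite !oadd_zero; auto.
  - rewrite !oadd_succ, IH. auto. apply succ_gt.
  - pose proof (oadd_limit M (oadd a b) Hl) as H1.
    pose proof (oadd_limit M a (add_limit b c Hl)) as H2.
    pose proof (oadd_limit M b Hl) as H3.
    apply le_antisym.
    + eapply lub_least; eauto. intros y [d [Hd ->]]. rewrite IH; auto.
      left. apply add_lt_mono_l, add_lt_mono_l; auto.
    + eapply lub_least; eauto. intros y [e [He ->]].
      destruct (lub_approx _ _ _ H3 He) as [z [[d [Hd ->]] Hz]].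
      left. apply lt_le_trans with (oadd a (oadd b d)). apply add_lt_mono_l; auto.
      rewrite <- IH; auto. eapply lub_upper; [exact H1| exists d; auto].
Qed.
Lemma add_le_mono_r (a b y:M) : a <=o b -> oadd a y <=o oadd b y.
Proof.
  intros Hab. induction y as [y IH] using ord_ind.
  destruct (ord_cases y) as [->|[[z ->]|Hl]].
  - rewrite !oadd_zero; auto.
  - rewrite !oadd_succ. apply succ_le_mono, IH, succ_gt.
  - eapply lub_least. apply (oadd_limit M a Hl). intros x [c [Hc ->]].
    eapply le_trans. apply IH; auto. eapply lub_upper. apply (oadd_limit M b Hl). exists c; auto.
Qed.
Lemma lt_add_pos_r (a y:M) : ozero <o y -> a <o oadd a y.
Proof. intros H. rewrite <- (oadd_zero M a) at 1. apply add_lt_mono_l; auto. Qed.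

Lemma wf_least (P : M -> Prop) : (exists y, P y) -> exists y, P y /\ forall z, z <o y -> ~ P z.
Proof.
  intros [y0 H0]. revert H0. induction y0 as [y0 IH] using ord_ind. intros H0.
  destruct (classic (exists z, z <o y0 /\ P z)) as [[z [H1 H2]]|Hn].
  - eapply IH; eauto.
  - exists y0; split; auto. intros z H1 H2; apply Hn; eauto.
Qed.

Lemma le_exists_sub (a x:M) : a <=o x -> exists r, oadd a r = x.
Proof.
  intros Hax.
  destruct (wf_least (fun r => x <=o oadd a r)) as [r [Hr Hmin]]; [exists x; apply le_add_l|].
  exists r. destruct Hr as [Hr|Hr]; auto. exfalso.
  destruct (ord_cases r) as [->|[[z ->]|Hl]].
  - rewrite oadd_zero in Hr. eapply le_not_lt; eauto.
  - rewrite oadd_succ in Hr. assert (Hz := Hmin z (succ_gt z)). apply not_le_lt in Hz.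
    apply succ_least in Hz. eapply le_not_lt; eauto.
  - destruct (lub_approx _ _ _ (oadd_limit M a Hl) Hr) as [y [[c [Hc ->]] Hy]].
    apply (Hmin c Hc). left; auto.
Qed.

Lemma nmul0 (x:M) : nmul x 0 = ozero. Proof. reflexivity. Qed.
Lemma nmulS (x:M) n : nmul x (S n) = oadd (nmul x n) x. Proof. reflexivity. Qed.
Lemma nmul1 (x:M) : nmul x 1 = x. Proof. unfold nmul; simpl. apply add_zero_l. Qed.
Lemma nmul_add (x:M) n m : nmul x (n + m) = oadd (nmul x n) (nmul x m).
Proof.
  induction m. rewrite Nat.add_0_r, nmul0, oadd_zero; auto.
  rewrite Nat.add_succ_r, !nmulS, IHm, add_assoc; auto.
Qed.
Lemma nmul_lt_mono (x:M) n m : ozero <o x -> (n < m)%nat -> nmul x n <o nmul x m.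
Proof.
  intros Hx Hnm. induction Hnm.
  - rewrite nmulS. apply lt_add_pos_r; auto.
  - rewrite nmulS. eapply lt_trans; eauto. apply lt_add_pos_r; auto.
Qed.
Lemma nmul_le_mono (x:M) n m : (n <= m)%nat -> nmul x n <=o nmul x m.
Proof.
  intros Hnm. induction Hnm. apply le_refl. rewrite nmulS. eapply le_trans; eauto. apply le_add_r.
Qed.
Lemma le_nmul_self (x:M) n : (1 <= n)%nat -> x <=o nmul x n.
Proof. intros H. rewrite <- nmul1 at 1. apply nmul_le_mono; auto. Qed.

Lemma nmul_le_exp_succ (x:M) n : nmul (oexp x) n <=o oexp (osucc x).
Proof. eapply lub_upper. apply (oexp_succ M x). exists n; reflexivity. Qed.
Lemma exp_le_limit (l c:M) : is_limit l -> c <o l -> oexp c <=o oexp l.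
Proof. intros Hl Hc. eapply lub_upper. apply (oexp_limit M Hl). exists c; auto. Qed.

Lemma exp_pos (x:M) : ozero <o oexp x.
Proof.
  induction x as [x IH] using ord_ind.
  destruct (ord_cases x) as [->|[[z ->]|Hl]].
  - rewrite oexp_zero. apply succ_gt.
  - eapply lt_le_trans. apply (IH z (succ_gt z)). rewrite <- (nmul1 (oexp z)).
    apply nmul_le_exp_succ.
  - assert (H0: ozero <o x) by (apply zero_lt; apply Hl).
    eapply lt_le_trans. apply (IH _ H0). apply exp_le_limit; auto.
Qed.
Lemma exp_lt_succ (x:M) : oexp x <o oexp (osucc x).
Proof.
  eapply lt_le_trans; [|apply (nmul_le_exp_succ x 2)]. rewrite <- (nmul1 (oexp x)) at 1.
  apply nmul_lt_mono; auto. apply exp_pos.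
Qed.
Lemma exp_lt_mono (a b:M) : a <o b -> oexp a <o oexp b.
Proof.
  revert a. induction b as [b IH] using ord_ind. intros a Hab.
  destruct (ord_cases b) as [->|[[z ->]|Hl]].
  - exfalso; eapply ozero_least; eauto.
  - apply lt_succ_le in Hab. destruct Hab as [H| ->].
    + eapply lt_trans. apply IH; eauto. apply succ_gt. apply exp_lt_succ.
    + apply exp_lt_succ.
  - eapply lt_le_trans. apply exp_lt_succ. apply exp_le_limit; auto. apply Hl; auto.
Qed.
Lemma exp_le_mono (a b:M) : a <=o b -> oexp a <=o oexp b.
Proof. intros [H| ->]. left; apply exp_lt_mono; auto. apply le_refl. Qed.
Lemma exp_inj (a b:M) : oexp a = oexp b -> a = b.
Proof. intros H.
  destruct (lt_total a b) as [H1|[H1|H1]]; auto;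
    apply exp_lt_mono in H1; rewrite H in H1; exfalso; eapply lt_irrefl; eauto.
Qed.
Lemma le_exp_self (x:M) : x <=o oexp x.
Proof.
  induction x as [x IH] using ord_ind. apply not_lt_le. intros H.
  specialize (IH _ H). apply exp_lt_mono in H. eapply le_not_lt; eauto.
Qed.
Lemma lt_exp_self (x:M) : ~ eps (oexp x) -> x <o oexp x.
Proof. intros Hne. destruct (le_exp_self x) as [H|H]; auto.
  exfalso; apply Hne; unfold eps; congruence. Qed.
Lemma nmul_lt_exp_succ (a:M) n : nmul (oexp a) n <o oexp (osucc a).
Proof. eapply lt_le_trans; [|apply (nmul_le_exp_succ a (S n))]. apply nmul_lt_mono. apply exp_pos.
  lia. Qed.

Lemma add_lt_exp (a x y:M) : x <o oexp a -> y <o oexp a -> oadd x y <o oexp a.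
Proof.
  revert x y. induction a as [a IH] using ord_ind. intros x y Hx Hy.
  destruct (ord_cases a) as [->|[[b ->]|Hl]].
  - rewrite oexp_zero in *. apply lt_succ_le in Hx, Hy.
    assert (x = ozero) by (apply le_antisym; auto; apply zero_le).
    assert (y = ozero) by (apply le_antisym; auto; apply zero_le). subst.
    rewrite oadd_zero. apply succ_gt.
  - destruct (lub_approx _ _ _ (oexp_succ M b) Hx) as [u [[n ->] Hu]].
    destruct (lub_approx _ _ _ (oexp_succ M b) Hy) as [v [[m ->] Hv]].
    eapply lt_le_trans. apply (add_lt_mono_l x). exact Hv.
    eapply le_trans. apply add_le_mono_r. left. exact Hu.
    fold (nmul (oexp b) n). fold (nmul (oexp b) m). rewrite <- nmul_add.
    left; apply nmul_lt_exp_succ.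
  - destruct (lub_approx _ _ _ (oexp_limit M Hl) Hx) as [u [[c1 [Hc1 ->]] Hu]].
    destruct (lub_approx _ _ _ (oexp_limit M Hl) Hy) as [v [[c2 [Hc2 ->]] Hv]].
    assert (Hc : exists c, c <o a /\ c1 <=o c /\ c2 <=o c).
    { destruct (lt_total c1 c2) as [H|[H|H]].
      - exists c2; split; auto. split; [left; auto| apply le_refl].
      - subst; exists c2; split; auto; split; apply le_refl.
      - exists c1; split; auto. split; [apply le_refl| left; auto]. }
    destruct Hc as [c [Hc [H1 H2]]].
    eapply lt_trans. apply (IH c Hc). eapply lt_le_trans; [exact Hu| apply exp_le_mono; exact H1].
    eapply lt_le_trans; [exact Hv| apply exp_le_mono; exact H2].
    apply exp_lt_mono; auto.
Qed.
Lemma nmul_lt_exp (a x:M) n : x <o oexp a -> nmul x n <o oexp a.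
Proof. intros Hx. induction n. apply exp_pos. rewrite nmulS. apply add_lt_exp; auto. Qed.
Lemma isP_pos (L:M) : isP L -> ozero <o L.
Proof. intros [xi ->]. apply exp_pos. Qed.

Lemma nat_least (P : nat -> Prop) : (exists n, P n) -> exists n, P n /\ forall k, (k < n)%nat -> ~ P k.
Proof.
  intros [n0 H0]. revert H0. induction n0 as [n0 IH] using lt_wf_ind. intros H0.
  destruct (classic (exists k, (k < n0)%nat /\ P k)) as [[k [H1 H2]]|Hn].
  - eapply IH; eauto.
  - exists n0; split; auto. intros k H1 H2; apply Hn; eauto.
Qed.

(** * Cantor normal forms *)

Definition term (p : M * nat) : M := nmul (fst p) (snd p).
Definition sum_step (acc : M) (p : M * nat) := oadd acc (nmul (fst p) (snd p)).
Lemma fold_sum_step_shift s (a:M) : fold_left sum_step s a = oadd a (fold_left sum_step s ozero).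
Proof.
  revert a. induction s as [|p s IH]; intros a; simpl.
  - rewrite oadd_zero; auto.
  - rewrite IH, (IH (sum_step ozero p)). unfold sum_step. rewrite add_zero_l, add_assoc. auto.
Qed.
Lemma sumCNF_nil : sumCNF (M:=M) [] = ozero. Proof. reflexivity. Qed.
Lemma sumCNF_cons p s : sumCNF (p :: s) = oadd (term p) (sumCNF s).
Proof. unfold sumCNF; simpl. rewrite (fold_sum_step_shift s). unfold sum_step. rewrite add_zero_l. reflexivity. Qed.
Lemma sumCNF_app (l1 l2 : list (M*nat)) : sumCNF (l1 ++ l2) = oadd (sumCNF l1) (sumCNF l2).
Proof. unfold sumCNF. rewrite fold_left_app. apply (fold_sum_step_shift l2). Qed.
Lemma sumCNF_single p : sumCNF [p] = term p.
Proof. rewrite sumCNF_cons, sumCNF_nil, oadd_zero; auto. Qed.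

Definition cnf_wf (s : list (M*nat)) := Forall (fun p => isP (fst p) /\ (1 <= snd p)%nat) s /\
  Sorted (fun p q => olt (fst q) (fst p)) s.
Lemma CNF_iff_wf x s : CNF x s <-> cnf_wf s /\ x = sumCNF s.
Proof. unfold CNF, cnf_wf. tauto. Qed.
Lemma CNF_term_P (x L:M) l s : CNF x s -> In (L,l) s -> isP L /\ (1 <= l)%nat.
Proof. intros [HF _] Hin. rewrite Forall_forall in HF. exact (HF _ Hin). Qed.

Lemma term_le_sumCNF (s : list (M*nat)) p : Forall (fun p => isP (fst p) /\ (1 <= snd p)%nat) s ->
  In p s -> fst p <=o term p /\ term p <=o sumCNF s.
Proof.
  intros HF Hin. split.
  - rewrite Forall_forall in HF. apply le_nmul_self, HF; auto.
  - induction s as [|q s IH]. destruct Hin. rewrite sumCNF_cons. destruct Hin as [->|Hin].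
    + apply le_add_r.
    + eapply le_trans. apply IH; auto. inversion HF; auto. apply le_add_l.
Qed.
Lemma sumCNF_app_le (pre post : list (M*nat)) : sumCNF pre <=o sumCNF (pre ++ post).
Proof. rewrite sumCNF_app. apply le_add_r. Qed.

Lemma sumCNF_lt_P (L:M) s : isP L -> Forall (fun q => isP (fst q) /\ fst q <o L) s -> sumCNF s <o L.
Proof.
  intros [a ->] HF. induction s as [|q s IH].
  - apply exp_pos.
  - inversion HF; subst. rewrite sumCNF_cons. apply add_lt_exp. apply nmul_lt_exp. apply H1.
    apply IH; auto.
Qed.

Lemma cnf_wf_tail p s : cnf_wf (p :: s) -> cnf_wf s.
Proof. intros [H1 H2]. split. inversion H1; auto. inversion H2; auto. Qed.
Lemma cnf_wf_app_l pre post : cnf_wf (pre ++ post) -> cnf_wf pre.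
Proof. intros [H1 H2]. split. apply Forall_app in H1; tauto. eapply Sorted_app_l; eauto. Qed.
Lemma cnf_wf_heads L l s : cnf_wf ((L,l) :: s) -> Forall (fun q => isP (fst q) /\ fst q <o L) s.
Proof.
  intros [H1 H2]. apply Sorted_StronglySorted in H2.
  - inversion H2; subst. inversion H1; subst. rewrite Forall_forall in *. intros q Hq. split.
    apply (proj1 (H6 q Hq)). apply (H4 q Hq).
  - intros a b c Hab Hbc. eapply lt_trans; eauto.
Qed.

Lemma CNF_tail (x:M) p s : CNF x (p :: s) -> CNF (sumCNF s) s.
Proof. rewrite !CNF_iff_wf. intros [H _]. split; auto. eapply cnf_wf_tail; eauto. Qed.
Lemma CNF_pre (x:M) pre post : CNF x (pre ++ post) -> CNF (sumCNF pre) pre.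
Proof. rewrite !CNF_iff_wf. intros [H _]. split; auto. eapply cnf_wf_app_l; eauto. Qed.
Lemma CNF_rest_lt (x L:M) l s : CNF x ((L,l) :: s) -> sumCNF s <o L.
Proof.
  rewrite CNF_iff_wf. intros [H _]. apply sumCNF_lt_P. destruct H as [H _]. inversion H; subst.
  apply H2.
  eapply cnf_wf_heads; eauto.
Qed.
Lemma CNF_head (x L:M) l s : CNF x ((L,l) :: s) -> nmul L l <=o x /\ x <o nmul L (S l) /\ L <=o x.
Proof.
  intros H. pose proof (CNF_rest_lt _ _ _ _ H) as Hr. pose proof H as H'.
  rewrite CNF_iff_wf in H. destruct H as [[HF _] ->]. rewrite sumCNF_cons. unfold term; simpl.
  inversion HF; subst. destruct H1 as [HP Hl].
  split; [apply le_add_r|split].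
  - rewrite nmulS. apply add_lt_mono_l; auto.
  - eapply le_trans. apply le_nmul_self; eauto. apply le_add_r.
Qed.
Lemma CNF_pos (x:M) p s : CNF x (p :: s) -> ozero <o x.
Proof.
  destruct p as [L l]. intros H. pose proof (CNF_head _ _ _ _ H) as [_ [_ H1]].
  rewrite CNF_iff_wf in H. destruct H as [[HF _] _]. inversion HF; subst. eapply lt_le_trans; eauto.
  apply isP_pos, H2.
Qed.
Lemma CNF_nil (x:M) : CNF x [] -> x = ozero.
Proof. rewrite CNF_iff_wf. intros [_ ->]. reflexivity. Qed.

Lemma CNF_unique (s1 : list (M*nat)) : forall s2 x, CNF x s1 -> CNF x s2 -> s1 = s2.
Proof.
  induction s1 as [|[L l] s1 IH]; intros s2 x H1 H2.
  - apply CNF_nil in H1. subst. destruct s2 as [|p s2]; auto. apply CNF_pos in H2.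
    exfalso; eapply lt_irrefl; eauto.
  - destruct s2 as [|[L' l'] s2].
    + apply CNF_nil in H2. subst. apply CNF_pos in H1. exfalso; eapply lt_irrefl; eauto.
    + pose proof (CNF_head _ _ _ _ H1) as [A1 [B1 C1]].
      pose proof (CNF_head _ _ _ _ H2) as [A2 [B2 C2]].
      assert (HP1 : isP L) by apply (CNF_term_P _ _ _ _ H1 (in_eq _ _)).
      assert (HP2 : isP L') by apply (CNF_term_P _ _ _ _ H2 (in_eq _ _)).
      assert (HL : L = L').
      { destruct (lt_total L L') as [H|[H|H]]; auto; exfalso.
        - destruct HP2 as [b Hb]. rewrite Hb in H. apply (nmul_lt_exp _ _ (S l)) in H.
          rewrite <- Hb in H.
          apply (lt_irrefl x). eapply lt_trans; [exact B1|]. eapply lt_le_trans; [exact H|exact C2].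
        - destruct HP1 as [b Hb]. rewrite Hb in H. apply (nmul_lt_exp _ _ (S l')) in H.
          rewrite <- Hb in H.
          apply (lt_irrefl x). eapply lt_trans; [exact B2|]. eapply lt_le_trans; [exact H|exact C1].
          }
      subst L'.
      assert (Hl : l = l').
      { destruct (Nat.lt_trichotomy l l') as [H|[H|H]]; auto; exfalso.
        - apply (nmul_le_mono L) in H. apply (lt_irrefl x). eapply lt_le_trans; [exact B1|].
          eapply le_trans; [exact H|exact A2].
        - apply (nmul_le_mono L) in H. apply (lt_irrefl x). eapply lt_le_trans; [exact B2|].
          eapply le_trans; [exact H|exact A1]. }
      subst l'.
      assert (Hs : sumCNF s1 = sumCNF s2).
      { destruct H1 as [_ [_ E1]]. destruct H2 as [_ [_ E2]]. rewrite sumCNF_cons in E1, E2.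
        rewrite E1 in E2. eapply add_cancel_l; eauto. }
      f_equal. eapply IH. eapply CNF_tail; eauto. rewrite Hs. eapply CNF_tail; eauto.
Qed.

Lemma CNF_single (L:M) l : isP L -> (1 <= l)%nat -> CNF (nmul L l) [(L,l)].
Proof. intros H1 H2. split. constructor; auto. split. constructor; auto.
  rewrite sumCNF_single; auto. Qed.
Lemma CNF_exp (A:M) : CNF (oexp A) [(oexp A, 1)].
Proof. rewrite <- (nmul1 (oexp A)) at 1. apply CNF_single. exists A; auto. auto. Qed.

Lemma CNF_exists (x:M) : exists s, CNF x s.
Proof.
  induction x as [x IH] using ord_ind.
  destruct (classic (x = ozero)) as [->|Hx0].
  { exists []; split. constructor. split. constructor. reflexivity. }
  destruct (wf_least (fun A => x <o oexp A)) as [A0 [HA0 HminA]].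
  { exists (osucc x). eapply le_lt_trans. apply le_exp_self. apply exp_lt_succ. }
  destruct (ord_cases A0) as [->|[[A ->]|Hl]].
  - exfalso. rewrite oexp_zero in HA0. apply lt_succ_le in HA0. apply Hx0. apply le_antisym; auto.
    apply zero_le.
  - assert (HAx : oexp A <=o x) by (apply not_lt_le; apply HminA, succ_gt).
    destruct (nat_least (fun n => x <o nmul (oexp A) n)) as [m [Hm Hminm]].
    { destruct (lub_approx _ _ _ (oexp_succ M A) HA0) as [y [[n ->] Hy]]. exists n; auto. }
    destruct m as [|k]. { exfalso; eapply ozero_least; eauto. }
    assert (Hk : nmul (oexp A) k <=o x) by (apply not_lt_le; apply Hminm; lia).
    destruct k as [|k]. { exfalso. rewrite nmul1 in Hm. exact (le_not_lt _ _ HAx Hm). }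
    destruct (le_exists_sub _ _ Hk) as [r Hr].
    assert (Hr1 : r <o oexp A). { rewrite nmulS, <- Hr in Hm. eapply add_lt_mono_l_inv; eauto. }
    assert (Hr2 : r <o x) by (eapply lt_le_trans; eauto).
    destruct (IH r Hr2) as [sr Hsr].
    exists ((oexp A, S k) :: sr). destruct Hsr as [F1 [S1 E1]]. split; [|split].
    + constructor; [split; [exists A; reflexivity | simpl; lia] | exact F1].
    + constructor; auto. destruct sr as [|q sr]. constructor. constructor. simpl.
      eapply le_lt_trans; [|exact Hr1]. subst r. inversion F1; subst.
      eapply le_trans; apply (term_le_sumCNF _ q F1); simpl; auto.
    + rewrite sumCNF_cons, <- E1. auto.
  - exfalso. destruct (lub_approx _ _ _ (oexp_limit M Hl) HA0) as [y [[c [Hc ->]] Hy]].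
    eapply HminA; eauto.
Qed.

Definition multi_term (s : list (M*nat)) :=
  (2 <= length s)%nat \/ exists L1 l1, s = [(L1, l1)] /\ (2 <= l1)%nat.

Lemma CNF_cases (x:M) cs : CNF x cs -> x <> ozero ->
  multi_term cs \/ exists L, cs = [(L,1)] /\ x = L /\ isP L.
Proof.
  intros H Hx. destruct cs as [|[L l] [|q cs]].
  - apply CNF_nil in H; contradiction.
  - destruct H as [HF [_ E]]. inversion HF; subst. destruct H1 as [HP Hl]; simpl in *.
    destruct l as [|[|l]]; try lia.
    + right. exists L. rewrite sumCNF_single. unfold term; simpl. rewrite nmul1. auto.
    + left. right. exists L, (S (S l)). split; auto. lia.
  - left. left. simpl. lia.
Qed.

Lemma multi_term_lt (x:M) cs : CNF x cs -> multi_term cs -> forall L l, In (L,l) cs -> L <o x.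
Proof.
  intros H Hc. destruct cs as [|[L1 l1] rest].
  { destruct Hc as [Hc|[? [? [Hc _]]]]; simpl in Hc; [lia|discriminate]. }
  assert (HL1 : L1 <o x).
  { pose proof H as [HF [_ E]]. inversion HF; subst. destruct H2 as [HP Hl]; simpl in *.
    destruct rest as [|q rest].
    - destruct Hc as [Hc|[L' [l' [Hc Hl']]]]; simpl in Hc; [lia|]. inversion Hc; subst.
      rewrite sumCNF_single. unfold term; simpl. rewrite <- (nmul1 L') at 1. apply nmul_lt_mono.
      apply isP_pos; auto. lia.
    - rewrite sumCNF_cons. eapply le_lt_trans. apply le_nmul_self; eauto. apply lt_add_pos_r.
      eapply CNF_pos. eapply CNF_tail; eauto. }
  intros L l [E|Hin]. inversion E; subst; auto.
  eapply lt_trans; [|exact HL1]. destruct H as [HF [HS _]].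
  pose proof (cnf_wf_heads L1 l1 rest (conj HF HS)) as G.
  rewrite Forall_forall in G. apply (G (L,l) Hin).
Qed.

Lemma Subst_id (a e : M) : forall x, x <o a -> Subst a e x x.
Proof.
  intros x. induction x as [x IH] using ord_ind. intros Hxa.
  destruct (classic (x = ozero)) as [->|Hx0]. apply Sb_zero.
  destruct (classic (eps x)) as [He|He]. apply Sb_eps; auto. apply lt_neq; auto.
  destruct (CNF_exists x) as [cs Hcs].
  destruct (CNF_cases _ _ Hcs Hx0) as [Hc|[L [-> [E HP]]]].
  - assert (E : x = sumCNF cs) by apply Hcs. rewrite E at 2.
    apply Sb_sum with (s := cs); auto. rewrite <- (map_id cs) at 2. apply Forall2_map.
    intros [L l] Hin. split; auto. simpl.
    apply IH. eapply multi_term_lt; eauto. eapply lt_trans; [|exact Hxa].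
    eapply multi_term_lt; eauto.
  - subst L. destruct HP as [A HA]. rewrite HA at 2.
    assert (HAx : A <o x) by (subst x; apply lt_exp_self; auto).
    eapply Sb_pow; eauto. apply IH; auto. eapply lt_trans; eauto.
Qed.

Lemma Ep_le (x e : M) : Ep x e -> e <=o x.
Proof.
  induction 1.
  - apply le_refl.
  - eapply le_trans; eauto. destruct H0 as [HF [_ ->]].
    destruct (term_le_sumCNF s (L,l) HF H2); eapply le_trans; eauto.
  - subst. eapply le_trans; eauto. apply le_exp_self.
Qed.

(** * The sets S_CNF(t) and B(t) *)

Lemma SCNF_le (q y : M) : SCNF q y -> y <=o q.
Proof.
  induction 1.
  - destruct H as [HF [_ ->]]. apply (proj2 (term_le_sumCNF s (L,l) HF H0)).
  - destruct H as [_ [_ ->]]. rewrite <- (firstn_skipn j s) at 2. apply sumCNF_app_le.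
  - eapply le_trans; eauto. subst L. eapply le_trans. apply le_exp_self.
    destruct H as [HF [_ ->]]. destruct (term_le_sumCNF s (oexp A,l) HF H0); eapply le_trans; eauto.
Qed.

Lemma SCNF_self (A : M) : A <> ozero -> SCNF A A.
Proof.
  intros HA. destruct (CNF_exists A) as [cs Hcs]. destruct cs as [|p cs].
  apply CNF_nil in Hcs; contradiction.
  assert (E : A = sumCNF (firstn (length (p::cs)) (p::cs))) by (rewrite firstn_all; apply Hcs).
  rewrite E at 2. eapply SC_part; eauto. simpl; lia.
Qed.

Lemma CNF_firstn (x:M) s j : CNF x s -> CNF (sumCNF (firstn j s)) (firstn j s).
Proof. intros H. rewrite <- (firstn_skipn j s) in H. eapply CNF_pre; eauto. Qed.

Lemma SCNF_closed (q y : M) : SCNF q y -> forall cs, CNF y cs ->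
  (forall pre post, cs = pre ++ post -> pre <> [] -> SCNF q (sumCNF pre)) /\
  (forall L l, In (L,l) cs -> SCNF q (nmul L l)) /\
  (forall L l A, In (L,l) cs -> ~ eps L -> L = oexp A -> A <> ozero -> SCNF q A).
Proof.
  induction 1; intros cs Hcs.
  - assert (HP := CNF_term_P _ _ _ _ H H0).
    assert (cs = [(L,l)]) by (eapply CNF_unique; eauto; apply CNF_single; tauto). subst cs.
    split; [|split].
    + intros pre post E Hne. destruct pre as [|p pre]. contradiction. inversion E; subst.
      destruct pre; [|discriminate]. rewrite sumCNF_single. eapply SC_term; eauto.
    + intros L' l' [E|[]]. inversion E; subst. eapply SC_term; eauto.
    + intros L' l' A [E|[]] Hne HA HA0. inversion E; subst. eapply SC_rec; eauto.
      apply SCNF_self; auto.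
  - assert (cs = firstn j s) by (eapply CNF_unique; eauto; eapply CNF_firstn; eauto). subst cs.
    split; [|split].
    + intros pre post E Hne. destruct (firstn_prefix _ _ _ s j E eq_refl) as [E1 E2].
      rewrite <- E1. eapply SC_part; eauto. destruct pre; simpl in *; [contradiction|lia].
    + intros L l Hin. eapply SC_term; eauto. eapply in_firstn; eauto.
    + intros L l A Hin Hne HA HA0. eapply SC_rec; eauto. eapply in_firstn; eauto.
      apply SCNF_self; auto.
  - destruct (IHSCNF cs Hcs) as [I1 [I2 I3]]. split; [|split].
    + intros pre post E Hne. eapply SC_rec; eauto.
    + intros L0 l0 Hin. eapply SC_rec; eauto.
    + intros L0 l0 A0 Hin Hne HA HA0. eapply SC_rec; eauto.
Qed.

Definition cnf_closed (P : M -> Prop) (y : M) := forall cs, CNF y cs ->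
  (forall pre post, cs = pre ++ post -> pre <> [] -> P (sumCNF pre)) /\
  (forall L l j, In (L,l) cs -> (1 <= j <= l)%nat -> P (nmul L j)) /\
  (forall L l A, In (L,l) cs -> ~ eps L -> L = oexp A -> A <> ozero -> P A).

Lemma cnf_closed_mono (P Q : M -> Prop) y : (forall x, P x -> Q x) -> cnf_closed P y -> cnf_closed Q y.
Proof. intros H C cs Hcs. destruct (C cs Hcs) as [C1 [C2 C3]]. split; [|split]; eauto. Qed.

Lemma inB_cnf_closed (t y : M) : inB t y -> cnf_closed (inB t) y.
Proof.
  intros [Hy|[L [q [j [Hq [HP [Hq1 [Hj ->]]]]]]]] cs Hcs.
  - destruct (SCNF_closed _ _ Hy cs Hcs) as [I1 [I2 I3]]. split; [|split].
    + intros; left; eauto.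
    + intros L l j Hin Hj. right. exists L, l, j.
      destruct (CNF_term_P _ _ _ _ Hcs Hin). repeat split; auto; lia.
    + intros; left; eauto.
  - assert (cs = [(L,j)]) by (eapply CNF_unique; eauto; apply CNF_single; auto; lia). subst cs.
    split; [|split].
    + intros pre post E Hne. destruct pre as [|p pre]. contradiction. inversion E; subst.
      destruct pre; [|discriminate]. rewrite sumCNF_single. right. exists L, q, j.
      repeat split; auto; lia.
    + intros L' l' j' [E|[]] Hj'. inversion E; subst. right. exists L', q, j'.
      repeat split; auto; lia.
    + intros L' l' A [E|[]] Hne HA HA0. inversion E; subst. left.
      destruct (SCNF_closed _ _ Hq _ (CNF_single _ q HP Hq1)) as [_ [_ I3]].
      eapply I3; eauto. left; eauto.
Qed.

Lemma inB_le (t x : M) : inB t x -> x <=o t.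
Proof.
  intros [H|[L [q [j [Hq [HP [Hq1 [Hj ->]]]]]]]]. apply SCNF_le; auto.
  eapply le_trans; [|apply SCNF_le; eauto]. apply nmul_le_mono; lia.
Qed.

Definition finite (P : M -> Prop) := exists l, forall x, In x l <-> P x.
Lemma finite_ext (P Q : M -> Prop) : (forall x, P x <-> Q x) -> finite P -> finite Q.
Proof. intros H [l Hl]. exists l. intros x. rewrite Hl; auto. Qed.
Lemma finite_union (P Q : M -> Prop) : finite P -> finite Q -> finite (fun x => P x \/ Q x).
Proof. intros [l1 H1] [l2 H2]. exists (l1 ++ l2). intros x. rewrite in_app_iff, H1, H2. tauto. Qed.
Lemma finite_empty : finite (fun _ => False).
Proof. exists []. simpl. tauto. Qed.
Lemma finite_map {A} (l : list A) (f : A -> M) : finite (fun x => exists a, In a l /\ x = f a).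
Proof. exists (map f l). intros x. rewrite in_map_iff. firstorder. Qed.
Lemma finite_bigunion {A} (l : list A) (F : A -> M -> Prop) :
  (forall a, In a l -> finite (F a)) -> finite (fun x => exists a, In a l /\ F a x).
Proof.
  induction l as [|a l IH]; intros H.
  - eapply finite_ext; [|apply finite_empty]. simpl. firstorder.
  - eapply finite_ext;
      [|apply finite_union; [apply (H a); left; auto| apply IH; intros; apply H; right; auto]].
    intros x. simpl. split.
    + intros [Hx|[b [Hb Hx]]]. exists a; eauto. exists b; eauto.
    + intros [b [[<-|Hb] Hx]]; eauto.
Qed.

Lemma SCNF_finite (q : M) : finite (SCNF q).
Proof.
  induction q as [q IH] using ord_ind. destruct (CNF_exists q) as [cs Hcs].
  set (F := fun (p : M * nat) y => exists A, ~ eps (fst p) /\ fst p = oexp A /\ SCNF A y).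
  apply finite_ext with (P := fun y => (exists p, In p cs /\ y = term p) \/
        (exists j, In j (seq 1 (length cs)) /\ y = sumCNF (firstn j cs)) \/ (exists p, In p cs /\ F p y)).
  - intros y. split.
    + intros [[p [Hp ->]]|[[j [Hj ->]]|[[L l] [Hp [A [H1 [H2 H3]]]]]]].
      * destruct p as [L l]. eapply SC_term; eauto.
      * apply in_seq in Hj. eapply SC_part; eauto. lia.
      * eapply SC_rec; eauto.
    + intros H. destruct H as [q' s L l Hs Hin|q' s j Hs Hj|q' s L l A y' Hs Hin Hne HA Hy].
      * assert (s = cs) by (eapply CNF_unique; eauto). subst s. left. exists (L,l); auto.
      * assert (s = cs) by (eapply CNF_unique; eauto). subst s. right; left. exists j. split; auto.
        apply in_seq; lia.
      * assert (s = cs) by (eapply CNF_unique; eauto). subst s. right; right. exists (L,l).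
        split; auto. exists A; auto.
  - apply finite_union. apply finite_map. apply finite_union. apply finite_map.
    apply finite_bigunion. intros [L l] Hin.
    destruct (classic (exists A, ~ eps L /\ L = oexp A)) as [[A [Hne HA]]|Hn].
    + apply finite_ext with (P := SCNF A).
      * intros y. split. intros Hy; exists A; auto. intros [A' [_ [HA' Hy]]]. simpl in HA'.
        rewrite HA in HA'. apply exp_inj in HA'. subst; auto.
      * apply IH. assert (HAL : A <o L).
        { subst L. apply lt_exp_self; auto. }
        eapply lt_le_trans; eauto. destruct Hcs as [HF [_ ->]].
        eapply le_trans; apply (term_le_sumCNF cs (L,l) HF Hin).
    + eapply finite_ext; [|apply finite_empty]. intros y. split; [tauto|]. intros [A [H1 [H2 _]]].
      apply Hn; eauto.
Qed.

Lemma inB_finite (t : M) : finite (inB t).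
Proof.
  destruct (SCNF_finite t) as [Sl HSl].
  set (G := fun (y x : M) => exists (L : M) q j,
    y = nmul L q /\ isP L /\ (1 <= q)%nat /\ (1 <= j <= q)%nat /\ x = nmul L j).
  apply finite_ext with (P := fun x => SCNF t x \/ exists y, In y Sl /\ G y x).
  - intros x. unfold inB. split.
    + intros [H|[y [Hy [L [q [j [-> H]]]]]]]; auto. right. exists L, q, j. rewrite <- HSl; auto.
    + intros [H|[L [q [j [H1 H2]]]]]; auto. right. exists (nmul L q). split. apply HSl; auto.
      exists L, q, j; auto.
  - apply finite_union. exists Sl; auto. apply finite_bigunion. intros y _.
    destruct (classic (exists L q, y = nmul L q /\ isP L /\ (1 <= q)%nat)) as [[L [q [Hy [HP Hq]]]]|Hn].
    + apply finite_ext with (P := fun x => exists j, In j (seq 1 q) /\ x = nmul L j); [|apply finite_map].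
      intros x. split.
      * intros [j [Hj ->]]. apply in_seq in Hj. exists L, q, j. repeat split; auto; lia.
      * intros [L' [q' [j [Hy' [HP' [Hq' [Hj ->]]]]]]].
        assert (E : [(L,q)] = [(L',q')]).
        { eapply CNF_unique. apply CNF_single; eauto. rewrite <- Hy, Hy'. apply CNF_single; auto. }
        inversion E; subst. exists j. split; auto. apply in_seq; lia.
    + eapply finite_ext; [|apply finite_empty]. intros x. split; [tauto|].
      intros [L [q [j [H1 [H2 [H3 _]]]]]]. apply Hn; eauto.
Qed.

Lemma below_next_eps_le (a t x : M) : below_next_eps a t -> x <=o t -> below_next_eps a x.
Proof. intros H Hx e He Hae. eapply le_lt_trans; eauto. Qed.

Lemma below_next_eps_not_eps (a t : M) : below_next_eps a t -> a <o t -> ~ eps t.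
Proof. intros H Hat He. apply (lt_irrefl t), H; auto. Qed.

Lemma eps_pos (a : M) : eps a -> ozero <o a.
Proof. intros H. rewrite <- H. apply exp_pos. Qed.

(** * Isomorphisms fixing the ordinals below alpha *)

Section IsoSubst.
Variables (alpha : M) (Z : list M) (h : M -> M).
Hypothesis Halpha : eps alpha.
Hypothesis Hiso : iso2 Z h.
Hypothesis Hfix : forall x, In x Z -> x <o alpha -> h x = x.
Hypothesis Halpha_in : In alpha Z.
Hypothesis Hbelow : forall x, In x Z -> below_next_eps alpha x.
Hypothesis Hclosed : forall x, In x Z -> alpha <o x -> cnf_closed (fun y => In y Z) x.

Lemma iso_lt x y : In x Z -> In y Z -> x <o y -> h x <o h y.
Proof. intros Hx Hy H. destruct Hiso as [I _]. apply (proj1 (I x y x Hx Hy Hx)); auto. Qed.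
Lemma iso_add x y z : In x Z -> In y Z -> In z Z -> oadd x y = z -> oadd (h x) (h y) = h z.
Proof. intros Hx Hy Hz H. destruct Hiso as [I _]. apply (proj2 (proj2 (I x y z Hx Hy Hz))); auto.
  Qed.
Lemma iso_exp x y : In x Z -> In y Z -> oexp x = y -> oexp (h x) = h y.
Proof. intros Hx Hy H. destruct Hiso as [_ I]. apply (proj1 (I x y Hx Hy)); auto. Qed.

Definition iso_subst_at (s : M) : Prop :=
  (forall e, Ep s e -> e <o alpha -> e <o h alpha) /\ Subst alpha (h alpha) s (h s).

Lemma iso_subst_below s : In s Z -> s <o alpha -> iso_subst_at s.
Proof.
  intros Hs Hsa. unfold iso_subst_at. rewrite (Hfix s Hs Hsa). split.
  - intros e He _. apply Ep_le in He. eapply le_lt_trans; eauto.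
    rewrite <- (Hfix s Hs Hsa). apply iso_lt; auto.
  - apply Subst_id; auto.
Qed.

Lemma iso_subst_alpha : iso_subst_at alpha.
Proof.
  split; [|apply Sb_alpha].
  intros e He Hea. inversion He; subst; try contradiction. exfalso; eapply lt_irrefl; eauto.
Qed.

Section Above.
Variables (s : M) (cs : list (M * nat)).
Hypothesis Hs : In s Z.
Hypothesis Has : alpha <o s.
Hypothesis Hcs : CNF s cs.

Let HC := Hclosed s Hs Has cs Hcs.

Lemma iso_term_in L l : In (L,l) cs -> In L Z.
Proof.
  intros Hin. rewrite <- (nmul1 L). eapply (proj1 (proj2 HC)); eauto.
  destruct (CNF_term_P _ _ _ _ Hcs Hin); lia.
Qed.

Lemma iso_nmul L l j : In (L,l) cs -> (1 <= j <= l)%nat -> h (nmul L j) = nmul (h L) j.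
Proof.
  destruct HC as [_ [C2 _]]. intros Hin Hj. induction j as [|j IHj]; [lia|]. destruct j as [|j].
  - rewrite !nmul1; auto.
  - rewrite (nmulS (h L) (S j)), <- IHj by lia. symmetry. apply iso_add.
    + eapply C2; eauto; lia.
    + eapply iso_term_in; eauto.
    + eapply C2; eauto.
    + reflexivity.
Qed.

Let hterm (p : M * nat) := (h (fst p), snd p).

Lemma iso_sumCNF_prefix pre post : cs = pre ++ post -> pre <> [] ->
  h (sumCNF pre) = sumCNF (map hterm pre).
Proof.
  destruct HC as [C1 [C2 _]].
  revert post. induction pre as [|[L l] pre IH] using rev_ind; intros post E Hpre; [contradiction|].
  assert (Hin : In (L,l) cs) by (rewrite E; apply in_or_app; left; apply in_or_app; right; left; auto).
  assert (Hl : (1 <= l)%nat) by apply (CNF_term_P _ _ _ _ Hcs Hin).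
  destruct (classic (pre = [])) as [->|Hne].
  - simpl. rewrite !sumCNF_single. apply (iso_nmul L l l Hin). lia.
  - rewrite map_app, !sumCNF_app. cbn [map]. rewrite !sumCNF_single.
    change (term (hterm (L,l))) with (nmul (h L) l). change (term (L,l)) with (nmul L l).
    rewrite <- (IH ((L,l) :: post)); auto. 2: rewrite E, <- app_assoc; auto.
    rewrite <- (iso_nmul L l l Hin) by lia. symmetry. apply iso_add.
    + eapply C1; eauto. rewrite E, <- app_assoc; auto.
    + eapply C2; eauto.
    + replace (oadd (sumCNF pre) (nmul L l)) with (sumCNF (pre ++ [(L,l)]))
        by (rewrite sumCNF_app, sumCNF_single; auto).
      eapply C1; eauto.
    + reflexivity.
Qed.

Lemma iso_subst_sum : multi_term cs -> (forall L l, In (L,l) cs -> iso_subst_at L) -> iso_subst_at s.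
Proof.
  intros Hc IH.
  assert (Hne := below_next_eps_not_eps _ _ (Hbelow s Hs) Has).
  assert (Ehs : h s = sumCNF (map hterm cs)).
  { assert (E : s = sumCNF cs) by apply Hcs.
    rewrite E at 1. apply (iso_sumCNF_prefix cs []); [now rewrite app_nil_r|].
    intros Hnil. rewrite Hnil in Hc.
    destruct Hc as [Hc|[? [? [Hc _]]]]; [simpl in Hc; lia|discriminate]. }
  split.
  - intros e He Hea. inversion He; subst; try contradiction.
    + assert (s0 = cs) by (eapply CNF_unique; eauto). subst s0. apply (IH L l); auto.
    + assert (cs = [(oexp L, 1)]) by (eapply CNF_unique; eauto; apply CNF_exp). subst cs.
      destruct Hc as [Hc|[L1 [l1 [E1 E2]]]]; [simpl in Hc; lia|]. inversion E1; lia.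
  - rewrite Ehs. apply Sb_sum with (s := cs); auto. apply Forall2_map. intros [L l] Hin.
    split; auto. apply (IH L l Hin).
Qed.

End Above.

Lemma iso_exp_arg s A : In s Z -> alpha <o s -> s = oexp A -> In A Z /\ A <o s.
Proof.
  intros Hs Has EsA.
  assert (Hne := below_next_eps_not_eps _ _ (Hbelow s Hs) Has).
  split; [|rewrite EsA in *; apply lt_exp_self; auto].
  assert (HA0 : A <> ozero).
  { intros ->. rewrite EsA, oexp_zero in Has. apply lt_succ_le in Has.
    apply (le_not_lt _ _ Has). apply eps_pos; auto. }
  assert (Hcs := CNF_exp A). rewrite <- EsA in Hcs.
  eapply (proj2 (proj2 (Hclosed s Hs Has _ Hcs)));
    [left; reflexivity | exact Hne | exact EsA | exact HA0].
Qed.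

Lemma iso_subst_exp s A : In s Z -> alpha <o s -> s = oexp A -> iso_subst_at A -> iso_subst_at s.
Proof.
  intros Hs Has EsA IH.
  assert (Hne := below_next_eps_not_eps _ _ (Hbelow s Hs) Has).
  destruct (iso_exp_arg s A Hs Has EsA) as [HAZ HAs].
  assert (Ehs : h s = oexp (h A)) by (symmetry; apply iso_exp; auto).
  split.
  - intros e He Hea.
    inversion He as [x Hx | x s0 L0 l0 e0 Hx Hcs0 Hc0 Hin0 HL0 | x L0 e0 Hx HL0 HEp].
    + exfalso. apply Hne. subst; auto.
    + assert (E0 : s0 = [(s, 1)])
        by (eapply CNF_unique; [exact Hcs0| subst x; rewrite EsA; apply CNF_exp]).
      subst s0. destruct Hc0 as [Hc|[L1 [l1 [E1 E2]]]]; [simpl in Hc; lia|]. inversion E1; lia.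
    + assert (L0 = A) by (apply exp_inj; congruence). subst L0. apply IH; auto.
  - rewrite Ehs. eapply Sb_pow; eauto. apply IH.
Qed.

Lemma iso_subst s : In s Z -> iso_subst_at s.
Proof.
  induction s as [s IH] using ord_ind. intros Hs.
  destruct (lt_total s alpha) as [Hsa|[->|Has]]; [apply iso_subst_below; auto|apply iso_subst_alpha|].
  assert (Hs0 : s <> ozero) by (intros ->; eapply ozero_least; eauto).
  destruct (CNF_exists s) as [cs Hcs].
  destruct (CNF_cases _ _ Hcs Hs0) as [Hc|[L [-> [-> [A EsA]]]]].
  - apply (iso_subst_sum s cs); auto. intros L l Hin.
    apply IH; [eapply multi_term_lt; eauto|eapply iso_term_in; eauto].
  - destruct (iso_exp_arg L A Hs Has EsA) as [HAZ HAs].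
    apply (iso_subst_exp L A); auto.
Qed.

End IsoSubst.

Lemma iso2_sub (Z B : list M) h : iso2 Z h -> (forall x, In x B -> In x Z) -> iso2 B h.
Proof.
  intros [I1 I2] Hs. split.
  - intros x y z Hx Hy Hz. apply I1; auto.
  - intros x y Hx Hy. apply I2; auto.
Qed.

Lemma alpha_in_B (alpha : M) (Ha : eps alpha) :
  forall t, alpha <=o t -> below_next_eps alpha t -> inB t alpha.
Proof.
  intros t. induction t as [t IH] using ord_ind. intros Hle Hbt.
  destruct Hle as [Hat| <-]; [|left; apply SCNF_self, not_eq_sym, lt_neq, eps_pos, Ha].
  destruct (CNF_exists t) as [cs Hcs].
  destruct cs as [|[L1 l1] rest].
  { apply CNF_nil in Hcs. subst. exfalso; eapply ozero_least; eauto. }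
  destruct (CNF_head _ _ _ _ Hcs) as [A1 [B1 C1]].
  assert (HP1 := CNF_term_P _ _ _ _ Hcs (in_eq _ _)).
  destruct HP1 as [HP1 Hl1].
  destruct (lt_total L1 alpha) as [H|[H|H]].
  - exfalso. destruct HP1 as [b Hb].
    assert (H' : oexp b <o oexp alpha) by (rewrite Ha, <- Hb; auto).
    apply (nmul_lt_exp _ _ (S l1)) in H'. rewrite <- Hb, Ha in H'.
    apply (lt_irrefl t). eapply lt_trans; [exact B1|]. eapply lt_trans; eauto.
  - subst L1. right. exists alpha, l1, 1. split; [eapply SC_term; eauto; left; auto|].
    split; [exists alpha; symmetry; exact Ha|]. split; [auto|]. split; [lia|]. rewrite nmul1; auto.
  - assert (HneL : ~ eps L1) by (intros He; apply (le_not_lt _ _ C1); apply Hbt; auto).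
    destruct HP1 as [A HA].
    assert (HAa : alpha <=o A).
    { apply not_lt_le. intros HAa. apply exp_lt_mono in HAa. rewrite Ha, <- HA in HAa.
      apply (lt_irrefl L1). eapply lt_trans; eauto. }
    assert (HAL : A <o L1) by (subst L1; apply lt_exp_self; auto).
    assert (HAt : A <o t) by (eapply lt_le_trans; eauto).
    destruct (IH A HAt HAa (below_next_eps_le _ _ _ Hbt (lt_le_incl _ _ HAt)))
      as [Hs|[L [q [j [Hq Hr]]]]].
    + left. eapply SC_rec; eauto. left; auto.
    + right. exists L, q, j. split; auto. eapply SC_rec; eauto. left; auto.
Qed.

Lemma finite_cnf_closure (B : list M) : exists Z, incl B Z /\
  (forall x, In x Z -> exists s, In s B /\ x <=o s) /\
  (forall x, In x Z -> x <> ozero -> cnf_closed (fun y => In y Z) x).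
Proof.
  destruct (finite_bigunion B (fun s => inB s) (fun s _ => inB_finite s)) as [Zl HZl].
  exists (B ++ Zl). split; [|split].
  - intros x Hx. apply in_or_app; auto.
  - intros x Hx. apply in_app_iff in Hx as [Hx|Hx]; [exists x; split; auto; apply le_refl|].
    destruct (proj1 (HZl x) Hx) as [s [Hs Hxs]]. exists s; split; auto. apply inB_le; auto.
  - intros x Hx Hx0. apply in_app_iff in Hx as [Hx|Hx].
    + apply cnf_closed_mono with (P := inB x); [|apply inB_cnf_closed; left; apply SCNF_self; auto].
      intros y Hy. apply in_or_app. right. apply HZl. exists x; auto.
    + destruct (proj1 (HZl x) Hx) as [s [Hs Hxs]].
      apply cnf_closed_mono with (P := inB s); [|apply inB_cnf_closed; auto].
      intros y Hy. apply in_or_app. right. apply HZl. exists s; auto.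
Qed.

Lemma iso_on_B_subst (alpha t : M) (h : M -> M) :
  eps alpha -> alpha <=o t -> below_next_eps alpha t ->
  (forall Bl, (forall x, In x Bl <-> inB t x) -> iso2 Bl h) ->
  (forall x, inB t x -> x <o alpha -> h x = x) ->
  eps (h alpha) /\ forall s, inB t s -> iso_subst_at alpha h s.
Proof.
  intros Halpha Hle Hbt Hall Hfix.
  destruct (inB_finite t) as [Bl HBl].
  pose proof (Hall Bl HBl) as Hiso.
  pose proof (proj2 (HBl alpha) (alpha_in_B alpha Halpha t Hle Hbt)) as HaB.
  assert (Hsub : forall s, In s Bl -> iso_subst_at alpha h s).
  { apply (iso_subst alpha Bl h Halpha Hiso); auto.
    - intros x Hx. apply Hfix, HBl; auto.
    - intros x Hx. eapply below_next_eps_le, inB_le, HBl; eauto.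
    - intros x Hx _. apply cnf_closed_mono with (P := inB t); [intros y; apply HBl|].
      apply inB_cnf_closed, HBl; auto. }
  split; [apply (iso_exp Bl h Hiso); auto|].
  intros s Hs. apply Hsub, HBl; auto.
Qed.

Lemma ltup1_subst (alpha t : M) (B : list M) :
  eps alpha -> below_next_eps alpha t -> ltup1 alpha t ->
  (forall x, In x B -> x <o t) ->
  exists h : M -> M, iso2 B h /\ (forall x, In x B -> h x <o alpha) /\
    (forall x, In x B -> x <o alpha -> h x = x) /\
    eps (h alpha) /\ h alpha <o alpha /\ forall s, In s B -> iso_subst_at alpha h s.
Proof.
  intros Halpha Hbt [Hat Hup] HB.
  destruct (finite_cnf_closure B) as [Z [HBZ [Hbound Hcl]]].
  assert (HZt : forall x, In x (alpha :: Z) -> x <o t).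
  { intros x [<-|Hx]; auto. destruct (Hbound x Hx) as [s [Hs Hxs]]. eapply le_lt_trans; eauto. }
  destruct (Hup (alpha :: Z) HZt) as [h [Hiso [Hlt Hfix]]].
  assert (Hsub : forall s, In s (alpha :: Z) -> iso_subst_at alpha h s).
  { apply (iso_subst alpha (alpha :: Z) h Halpha Hiso); auto; [left; auto| |].
    - intros x Hx. apply (below_next_eps_le _ _ _ Hbt), lt_le_incl, HZt; auto.
    - intros x [<-|Hx] Hax; [exfalso; eapply lt_irrefl; eauto|].
      apply cnf_closed_mono with (P := fun y => In y Z); [right; auto|].
      apply Hcl; auto. apply not_eq_sym, lt_neq. eapply le_lt_trans; [apply zero_le|exact Hax]. }
  exists h. split; [|split; [|split; [|split; [|split]]]].
  - eapply iso2_sub; eauto. intros x Hx. right; auto.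
  - intros x Hx. apply Hlt. right; auto.
  - intros x Hx. apply Hfix. right; auto.
  - apply (iso_exp (alpha :: Z) h Hiso); [left; auto|left; auto|exact Halpha].
  - apply Hlt; left; auto.
  - intros s Hs. apply Hsub. right; auto.
Qed.

End OrdinalModel.

Theorem mainTheorem3 (M : OrdModel) (alpha : M) (Halpha : eps alpha) :
  (* Part 1 *)
  (forall t : M, ole alpha t -> below_next_eps alpha t ->
   forall h : M -> M,
     (* h is an (<,<_1,+,omega^x)-isomorphism on B(t) (B(t) finite, listed by Bl) *)
     (forall Bl : list M, (forall x, In x Bl <-> inB t x) -> iso2 Bl h) ->
     (forall x, inB t x -> olt (h x) alpha) ->
     (forall x, inB t x -> olt x alpha -> h x = x) ->
     inB t alpha /\ eps (h alpha) /\ olt (h alpha) alpha /\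
     (forall s, inB t s ->
        (forall e, Ep s e -> olt e alpha -> olt e (h alpha)) /\
        Subst alpha (h alpha) s (h s))) /\
  (* Part 2 *)
  (forall t : M, olt alpha t -> below_next_eps alpha t -> ltup1 alpha t ->
   forall B : list M, (forall x, In x B -> olt x t) ->
   exists gamma : M, eps gamma /\ olt gamma alpha /\
     (forall s e, In s B -> Ep s e -> olt e alpha -> olt e gamma) /\
     exists h : M -> M,
       (forall s, In s B -> Subst alpha gamma s (h s)) /\
       iso2 B h /\
       (forall x, In x B -> olt (h x) alpha) /\
       (forall x, In x B -> olt x alpha -> h x = x)).
Proof.
  split.
  - intros t Hle Hbt h Hall HltB HfixB.
    destruct (iso_on_B_subst M alpha t h Halpha Hle Hbt Hall HfixB) as [Heps Hsub].
    pose proof (alpha_in_B M alpha Halpha t Hle Hbt) as HaB.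
    split; [exact HaB|split; [exact Heps|split; [apply HltB, HaB|exact Hsub]]].
  - intros t _ Hbt Hup B HB.
    destruct (ltup1_subst M alpha t B Halpha Hbt Hup HB)
      as [h [Hiso [Hlt [Hfix [Heps [Hha Hsub]]]]]].
    exists (h alpha). split; [exact Heps|split; [exact Hha|split]].
    + intros s e Hs. apply Hsub, Hs.
    + exists h. split; [intros s Hs; apply Hsub, Hs|split; [exact Hiso|split; assumption]].
Qed.
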